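(* Let $\pi_0$ be a policy, $\epsilon\in(0,1)$, $\lambda>0$, and $\pi^*(a|s)=\left(1+\epsilon\tanh(\tilde A_{\pi_0}(s,a)/(2\lambda))\right)\pi_0(a|s)$ with $\tilde A_{\pi_0}(s,a)=Q_{\pi_0}(s,a)-\mu_{\pi_0}(s)$, where $\mu_{\pi_0}(s)$ satisfies $\mathbb{E}_{a\sim\pi_0(\cdot|s)}[\tanh(\tilde A_{\pi_0}(s,a)/(2\lambda))]=0$. For a policy $\pi_\theta$ define $L^{\pi_\theta}_{\pi_0}(s)=\mathbb{E}_{a\sim\pi_\theta(\cdot|s)}[Q_{\pi_0}(s,a)]$ and $D^{ATV}_\theta(s)=\sum_a|(\pi_\theta(a|s)-\pi^*(a|s))A_{\pi_0}(s,a)|$. Then for every state $s$, $$L^{\pi_\theta}_{\pi_0}(s)\ge V_{\pi_0}(s)+\epsilon\,\mathbb{E}_{a\sim\pi_0(\cdot|s)}\left[\tanh\!\left(\frac{\tilde A_{\pi_0}(s,a)}{2\lambda}\right)\tilde A_{\pi_0}(s,a)\right]-D^{ATV}_\theta(s).$$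
   Context: Discounted MDP with discount $\gamma\in(0,1)$; for a policy $\pi$, $V_\pi(s)$ and $Q_\pi(s,a)$ are the expected discounted returns starting from state $s$ (resp. from $s$ with first action $a$) and following $\pi$ thereafter; $A_\pi=Q_\pi-V_\pi$. Sums over actions are replaced by integrals for continuous action spaces. *)

From HB Require Import structures.
From mathcomp Require Import all_boot all_order all_algebra.
From mathcomp Require Import all_classical all_reals all_analysis.
Set Implicit Arguments. Unset Strict Implicit. Unset Printing Implicit Defensive.
Import Order.TTheory GRing.Theory Num.Theory.
Local Open Scope ring_scope.

Section MDP.
Variables (R : realType) (S A : finType).

Definition tanh (x : R) : R := (expR x - expR (- x)) / (expR x + expR (- x)).

(* a (stochastic) policy pi(a|s) is written pi s a *)
Definition is_policy (pi : S -> A -> R) : Prop :=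
  (forall s a, 0 <= pi s a) /\ (forall s, \sum_a pi s a = 1).

Definition is_kernel (P : S -> A -> S -> R) : Prop :=
  (forall s a s', 0 <= P s a s') /\ (forall s a, \sum_s' P s a s' = 1).

Variables (P : S -> A -> S -> R) (r : S -> A -> R) (gamma : R).

Fixpoint exp_reward (pi : S -> A -> R) (t : nat) (s : S) : R :=
  match t with
  | 0 => \sum_a pi s a * r s a
  | t'.+1 => \sum_a pi s a * \sum_s' P s a s' * exp_reward pi t' s'
  end.

Definition Vf (pi : S -> A -> R) (s : S) : R :=
  limn (fun n => \sum_(0 <= t < n) gamma ^+ t * exp_reward pi t s).

Definition Qf (pi : S -> A -> R) (s : S) (a : A) : R :=
  r s a + gamma * \sum_s' P s a s' * Vf pi s'.

Definition Af (pi : S -> A -> R) (s : S) (a : A) : R := Qf pi s a - Vf pi s.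

End MDP.

From HB Require Import structures.
From mathcomp Require Import all_boot all_order all_algebra.
From mathcomp Require Import all_classical all_reals all_analysis.
From mathcomp Require Import ring lra.
Set Implicit Arguments. Unset Strict Implicit. Unset Printing Implicit Defensive.
Import Order.TTheory GRing.Theory Num.Theory.
Local Open Scope ring_scope.

(* Since pith sums to one, L - V is the pith-average of the advantage A.
   Split pith = (pith - pistar) + pistar: the first part contributes at least
   -DATV.  As pistar = pi0 + eps tanh(..) pi0 and A averages to zero under pi0
   (Bellman equation), the second part is eps E_pi0[tanh(..) A]; finally
   A = Atil + (mu - V), and the constant mu - V is averaged away because
   E_pi0[tanh(..)] = 0 by the choice of mu.  The Bellman equation for the
   series defining V holds because rewards are bounded, so the series is
   dominated by a geometric one. *)

Section WeightedSums.
Variables (R : realDomainType) (I : finType).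

Lemma sum_weighted_addr (w f : I -> R) (c : R) :
  \sum_i w i = 1 -> \sum_i w i * (f i + c) = \sum_i w i * f i + c.
Proof.
move=> w1; under eq_bigr do rewrite mulrDr.
by rewrite big_split /= -mulr_suml w1 mul1r.
Qed.

Lemma sum_orthogonal_addr (w g f : I -> R) (c : R) :
  \sum_i w i * g i = 0 ->
  \sum_i w i * (g i * (f i + c)) = \sum_i w i * (g i * f i).
Proof.
move=> wg0; under eq_bigr => i _ do rewrite mulrDr mulrDr [w i * (g i * c)]mulrA.
by rewrite big_split /= -mulr_suml wg0 mul0r addr0.
Qed.

Lemma sumr_ge_Nnorm (f : I -> R) : - \sum_i `|f i| <= \sum_i f i.
Proof.
by rewrite -sumrN; apply: ler_sum => i _; rewrite lerNl -normrN ler_norm.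
Qed.

Lemma tilted_policy_lower_bound (w0 w Q T : I -> R) (V m eps : R) :
  \sum_i w i = 1 -> \sum_i w0 i * (Q i - V) = 0 -> \sum_i w0 i * T i = 0 ->
  V + eps * (\sum_i w0 i * (T i * (Q i - m)))
    - \sum_i `|(w i - (1 + eps * T i) * w0 i) * (Q i - V)| <= \sum_i w i * Q i.
Proof.
move=> w1 w0_adv w0_T.
have mean_w : \sum_i w i * Q i = \sum_i w i * (Q i - V) + V.
  by rewrite -sum_weighted_addr //; apply: eq_bigr => i _; rewrite subrK.
have gain : \sum_i (1 + eps * T i) * w0 i * (Q i - V)
            = eps * \sum_i w0 i * (T i * (Q i - m)).
  rewrite -(sum_orthogonal_addr (fun i => Q i - m) (m - V) w0_T) mulr_sumr.
  rewrite -[RHS]add0r -{2}w0_adv -big_split /=.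
  by apply: eq_bigr => i _; ring.
have split_w : \sum_i w i * (Q i - V) =
    \sum_i (w i - (1 + eps * T i) * w0 i) * (Q i - V)
    + \sum_i (1 + eps * T i) * w0 i * (Q i - V).
  by rewrite -big_split; apply: eq_bigr => i _ /=; ring.
have /= := sumr_ge_Nnorm (fun i => (w i - (1 + eps * T i) * w0 i) * (Q i - V)).
lra.
Qed.

End WeightedSums.

Section Bellman.
Import numFieldNormedType.Exports.
Local Open Scope classical_set_scope.
Variables (R : realType) (S A : finType).
Variables (P : S -> A -> S -> R) (r : S -> A -> R) (gamma : R).
Hypotheses (hP : is_kernel P) (hgamma : 0 < gamma < 1).
Variables (pi : S -> A -> R).
Hypothesis hpi : is_policy pi.

Let reward_bound := \sum_s \sum_a `|r s a|.

Let discounted_return s : nat -> R :=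
  series (fun t => gamma ^+ t * exp_reward P r pi t s).

Lemma exp_reward_bounded t s : `|exp_reward P r pi t s| <= reward_bound.
Proof.
have r_bounded s' a : `|r s' a| <= reward_bound.
  rewrite /reward_bound (bigD1 s') //= (bigD1 a) //= -addrA lerDl.
  by rewrite addr_ge0 // sumr_ge0 // => *; rewrite sumr_ge0.
have average_bounded (w : A -> R) (f : A -> R) :
    (forall a, 0 <= w a) -> \sum_a w a = 1 ->
    (forall a, `|f a| <= reward_bound) -> `|\sum_a w a * f a| <= reward_bound.
  move=> w0 w1 fM; apply: le_trans (ler_norm_sum _ _ _) _.
  rewrite -[reward_bound]mul1r -w1 mulr_suml; apply: ler_sum => a _.
  by rewrite normrM ger0_norm // ler_wpM2l.
case: hP => P0 P1; case: hpi => pi0 pi1.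
elim: t s => [|t IH] s /=; apply: average_bounded => // a.
apply: le_trans (ler_norm_sum _ _ _) _.
rewrite -[reward_bound]mul1r -(P1 s a) mulr_suml; apply: ler_sum => s' _.
by rewrite normrM ger0_norm // ler_wpM2l.
Qed.

Lemma is_cvg_discounted_return s : cvgn (discounted_return s).
Proof.
case/andP: hgamma => g0 g1; have g0' := ltW g0.
apply: (@normed_cvg _ R^o).
apply: (@series_le_cvg _ _ (geometric reward_bound gamma)) => [n|n|n|].
- exact: normr_ge0.
- by rewrite /geometric /= mulr_ge0 ?exprn_ge0 // sumr_ge0 // => *; rewrite sumr_ge0.
- rewrite /= normrM (ger0_norm (exprn_ge0 _ g0')) mulrC.
  by rewrite ler_wpM2r ?exprn_ge0 // exp_reward_bounded.
- by apply: is_cvg_geometric_series; rewrite ger0_norm.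
Qed.

Lemma discounted_returnS n s :
  discounted_return s n.+1 =
  \sum_a pi s a * (r s a + gamma * \sum_s' P s a s' * discounted_return s' n).
Proof.
rewrite /discounted_return /series /= big_nat_recl //= expr0 mul1r.
under [RHS]eq_bigr do rewrite mulrDr.
rewrite big_split /=; congr (_ + _).
pose F t a s' := gamma ^+ t * gamma * pi s a * P s a s' * exp_reward P r pi t s'.
transitivity (\sum_(0 <= t < n) \sum_a \sum_s' F t a s').
  apply: eq_bigr => t _; rewrite exprSr -mulrA !mulr_sumr; apply: eq_bigr => a _.
  by rewrite !mulr_sumr; apply: eq_bigr => s' _; rewrite /F; ring.
rewrite exchange_big /=; apply: eq_bigr => a _.
rewrite exchange_big /= !mulr_sumr; apply: eq_bigr => s' _.
by rewrite !mulr_sumr; apply: eq_bigr => t _; rewrite /F; ring.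
Qed.

Lemma Vf_bellman s : Vf P r gamma pi s = \sum_a pi s a * Qf P r gamma pi s a.
Proof.
have to_V s' : discounted_return s' @ \oo --> Vf P r gamma pi s'.
  exact: is_cvg_discounted_return.
have shifted_to_V : (fun n => discounted_return s n.+1) @ \oo --> Vf P r gamma pi s.
  by rewrite (cvg_shiftS (discounted_return s)); exact: to_V.
suff shifted_to_Q : (fun n => discounted_return s n.+1) @ \oo -->
    \sum_a pi s a * Qf P r gamma pi s a.
  exact: cvg_unique _ shifted_to_V shifted_to_Q.
rewrite (funext (discounted_returnS^~ s)).
apply: (@cvg_big _ _ +%R 0 xpredT add_continuous) => // a _.
apply: cvgM; first exact: cvg_cst.
apply: cvgD; first exact: cvg_cst.
apply: cvgM; first exact: cvg_cst.
apply: (@cvg_big _ _ +%R 0 xpredT add_continuous) => // s' _.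
by apply: cvgM; [exact: cvg_cst | exact: to_V].
Qed.

Lemma Qf_Af_addr s a : Qf P r gamma pi s a = Af P r gamma pi s a + Vf P r gamma pi s.
Proof. by rewrite /Af subrK. Qed.

Lemma sum_Af_eq0 s : \sum_a pi s a * Af P r gamma pi s a = 0.
Proof.
have := Vf_bellman s; under eq_bigr do rewrite Qf_Af_addr.
by rewrite sum_weighted_addr ?(proj2 hpi) //; lra.
Qed.

End Bellman.

Theorem lemma2 (R : realType) (S A : finType)
  (P : S -> A -> S -> R) (r : S -> A -> R) (gamma : R)
  (hP : is_kernel P) (hgamma : 0 < gamma < 1)
  (pi0 pith : S -> A -> R) (hpi0 : is_policy pi0) (hpith : is_policy pith)
  (eps lam : R) (heps : 0 < eps < 1) (hlam : 0 < lam)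
  (mu : S -> R)
  (hmu : forall s, \sum_a pi0 s a * tanh ((Qf P r gamma pi0 s a - mu s) / (2 * lam)) = 0)
  (s : S) :
  let Atil := fun a => Qf P r gamma pi0 s a - mu s in
  let pistar := fun a => (1 + eps * tanh (Atil a / (2 * lam))) * pi0 s a in
  let L := \sum_a pith s a * Qf P r gamma pi0 s a in
  let DATV := \sum_a `|(pith s a - pistar a) * Af P r gamma pi0 s a| in
  L >= Vf P r gamma pi0 s
       + eps * (\sum_a pi0 s a * (tanh (Atil a / (2 * lam)) * Atil a)) - DATV.
Proof.
rewrite /Af; exact: (tilted_policy_lower_bound (mu s) eps
  (proj2 hpith s) (sum_Af_eq0 r hP hgamma hpi0 s) (hmu s)).
Qed.
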